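(* For $m\leq n$, the module $\mathcal P_n/J_m$ is free as a right $R\mathfrak S_m$-module.
   Context: $R$ is a commutative ring, $\delta\in R$, and $\mathcal P_n=\mathcal P_n(R,\delta)$ is the partition algebra: the free $R$-module on set partitions (''diagrams'') of $\{-n,\dots,-1,1,\dots,n\}$ (negative = left nodes, positive = right nodes), with product by stacking, taking the induced partition on outer nodes, and multiplying by $\delta$ for each component consisting only of middle nodes. $J_m\subseteq\mathcal P_n$ is the left ideal spanned by all diagrams in which, among the right nodes $n-m+1,\dots,n$, there is at least one singleton block or at least one pair of distinct nodes in the same block. $R\mathfrak S_m$ acts on the right of $\mathcal P_n$ via $R\mathfrak S_m\subseteq\mathcal P_m\subseteq\mathcal P_n$, where $\mathcal P_m\subseteq\mathcal P_n$ by relabelling $\pm i\mapsto\pm(n-m+i)$ and adjoining blocks $\{-i,i\}$ for $1\leq i\leq n-m$, and $\mathfrak S_m\subseteq\mathcal P_m$ as the permutation diagrams (all blocks of the form $\{-i,j\}$); this action preserves $J_m$. *)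

From HB Require Import structures.
From mathcomp Require Import all_boot all_order all_algebra all_fingroup.
Set Implicit Arguments. Unset Strict Implicit. Unset Printing Implicit Defensive.
Import GRing.Theory.
Local Open Scope ring_scope.

(* Nodes of a partition diagram for P_n:  (false, i) is the left node -(i+1),
   (true, i) is the right node (i+1), for i : 'I_n. *)
Definition node (n : nat) := (bool * 'I_n)%type.

Definition is_diagram n (D : {set {set node n}}) : bool := partition D [set: node n].
Definition diagram n := {D : {set {set node n}} | is_diagram D}.

Definition same_block n (D : {set {set node n}}) (x y : node n) : bool :=
  y \in pblock D x.

(* Stacking: three rows of n nodes; row 0 = left nodes of the first factor,
   row 1 = middle (right nodes of the first = left nodes of the second),
   row 2 = right nodes of the second factor. *)
Definition tnode (n : nat) := ('I_3 * 'I_n)%type.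
Definition row0 : 'I_3 := @Ordinal 3 0 isT.
Definition row1 : 'I_3 := @Ordinal 3 1 isT.
Definition row2 : 'I_3 := @Ordinal 3 2 isT.
Definition top_emb n (x : node n) : tnode n := (if x.1 then row1 else row0, x.2).
Definition bot_emb n (x : node n) : tnode n := (if x.1 then row2 else row1, x.2).
Definition out_emb n (x : node n) : tnode n := (if x.1 then row2 else row0, x.2).

Definition stack_edge n (D1 D2 : {set {set node n}}) : rel (tnode n) :=
  fun u v =>
    [exists x, exists y, [&& top_emb x == u, top_emb y == v & same_block D1 x y]]
 || [exists x, exists y, [&& bot_emb x == u, bot_emb y == v & same_block D2 x y]].

Definition comp_raw n (D1 D2 : {set {set node n}}) : {set {set node n}} :=
  equivalence_partition
    (fun x y => connect (stack_edge D1 D2) (out_emb x) (out_emb y)) [set: node n].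

Definition mid_count n (D1 D2 : {set {set node n}}) : nat :=
  #|[set C in equivalence_partition (connect (stack_edge D1 D2)) [set: tnode n]
      | C \subset [set u : tnode n | u.1 == row1]]|.

(* The partition algebra P_n(R, delta): the free R-module on diagrams,
   represented by coefficient functions, with the stacking product. *)
Definition pmul (R : comPzRingType) (delta : R) n
    (x y : {ffun diagram n -> R}) : {ffun diagram n -> R} :=
  [ffun d : diagram n => \sum_(d1 : diagram n) \sum_(d2 : diagram n |
        comp_raw (val d1) (val d2) == val d)
        x d1 * y d2 * delta ^+ mid_count (val d1) (val d2)].

(* J_m: span of the diagrams having, among the right nodes n-m+1..n
   (i.e. (true, i) with n - m <= i), a singleton block or two distinct
   nodes in the same block. *)
Definition Jdiag n m (d : diagram n) : bool :=
  [exists i : 'I_n, (n - m <= i)%N && ([set (true, i)] \in val d)]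
  || [exists i : 'I_n, exists j : 'I_n,
        [&& (n - m <= i)%N, (n - m <= j)%N, i != j
          & same_block (val d) (true, i) (true, j)]].

Definition inJ (R : comPzRingType) n m (x : {ffun diagram n -> R}) : Prop :=
  forall d : diagram n, x d != 0 -> Jdiag m d.

(* Embedding S_m -> P_m -> P_n: sigma in 'S_m is the diagram with blocks
   {-i, sigma(i)}; relabel +-i |-> +-(n-m+i) and adjoin blocks {-i, i}, i <= n-m. *)
Definition perm_nat m (s : 'S_m) (t : nat) : nat :=
  if (insub t : option 'I_m) is Some i then val (s i) else t.
Definition ext_nat n m (s : 'S_m) (k : nat) : nat :=
  if (n - m <= k)%N then (n - m + perm_nat s (k - (n - m)))%N else k.
Definition ext_perm n m (s : 'S_m) (j : 'I_n) : 'I_n := insubd j (@ext_nat n m s j).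
Definition pdiag n m (s : 'S_m) : {set {set node n}} :=
  [set [set (false, j); (true, @ext_perm n m s j)] | j : 'I_n].

Definition gembed (R : comPzRingType) n m (a : {ffun 'S_m -> R})
  : {ffun diagram n -> R} :=
  [ffun d : diagram n => \sum_(s : 'S_m | @pdiag n m s == val d) a s].

Definition pn_ract (R : comPzRingType) (delta : R) n m
  (x : {ffun diagram n -> R}) (a : {ffun 'S_m -> R}) : {ffun diagram n -> R} :=
  pmul delta x (@gembed R n m a).

From Pilot Require Import Defs.
From mathcomp Require Import all_boot all_order all_algebra all_fingroup.
From mathcomp Require Import zify.
Set Implicit Arguments. Unset Strict Implicit. Unset Printing Implicit Defensive.
Import GRing.Theory.
Local Open Scope ring_scope.

(* Multiplying a diagram d on the right by the permutation diagram of s in S_m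
   closes no middle component, and just relabels the last m right nodes of d by
   s; this is a right action of S_m on diagrams.  It preserves the diagrams
   outside J_m and is free on them: there each of the last m right nodes shares
   its block with a node that no permutation moves, so d s = d forces s = 1.
   Hence every diagram outside J_m is uniquely r s with r in a transversal of
   the orbits, and the transversal is an R S_m-basis of P_n / J_m. *)

Section FreeActionTransversal.

Open Scope group_scope.

Variables (gT : finGroupType) (T : finType) (to : {action gT &-> T}) (S : {set T}).
Hypotheses (actsS : [acts [set: gT], on S | to])
           (freeS : {in S, forall x, 'C[x | to] = 1}).

Local Notation X := (orbit_transversal to [set: gT] S).

Lemma orbit_transversal_act_onto y :
  y \in S -> exists2 x, x \in X & exists a, to x a = y.
Proof.
move=> Sy; have [_ _ _ /(_ y Sy) [a _ Xya]] := orbit_transversalP actsS.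
by exists (to y a) => //; exists a^-1; rewrite actK.
Qed.

Lemma orbit_transversal_act_inj x y a b :
  x \in X -> y \in X -> to x a = to y b -> x = y /\ a = b.
Proof.
move=> Xx Xy Exy; have [_ sXS uniqX _] := orbit_transversalP actsS.
have to_xy : to x (a * b^-1) = y by rewrite actM Exy actK.
have eq_xy : x = y by apply/eqP; rewrite -uniqX //; apply/orbitP; exists (a * b^-1).
subst y; split=> //; have : a * b^-1 \in 'C[x | to] by exact/astab1P.
by rewrite freeS ?(subsetP sXS) // => /set1gP /eqP; rewrite -eq_mulgV1 => /eqP.
Qed.

End FreeActionTransversal.

Section Diagrams.

Variable n : nat.
Implicit Types (d : diagram n) (x y z : node n).

Lemma same_block_equiv d : equivalence_rel (same_block (val d)).
Proof. by move=> x y z; apply: (pblock_equivalence (valP d)); rewrite inE. Qed.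

Lemma same_block_refl d x : same_block (val d) x x.
Proof. by have [] := same_block_equiv d x x x. Qed.

Lemma same_block_sym d x y : same_block (val d) x y = same_block (val d) y x.
Proof.
have [_ Exy] := same_block_equiv d x y x; have [_ Eyx] := same_block_equiv d y x y.
by apply/idP/idP => [/Exy|/Eyx]; rewrite same_block_refl => <-.
Qed.

Lemma same_block_trans d x y z :
  same_block (val d) x y -> same_block (val d) y z -> same_block (val d) x z.
Proof. by move=> Hxy; have [_ /(_ Hxy) ->] := same_block_equiv d x y z. Qed.

Lemma eq_diagram d1 d2 : same_block (val d1) =2 same_block (val d2) -> d1 = d2.
Proof.
move=> E; apply: val_inj.
rewrite -(equivalence_partition_pblock (valP d1)).
rewrite -(equivalence_partition_pblock (valP d2)).
apply: eq_imset => x; apply/setP => y.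
by rewrite !inE; have := E x y; rewrite /same_block => ->.
Qed.

Lemma singleton_blockE d x :
  ([set x] \in val d) = [forall y, same_block (val d) x y ==> (y == x)].
Proof.
have [/eqP coverT tI _] := and3P (valP d).
have xd : x \in cover (val d) by rewrite coverT inE.
apply/idP/forallP => [Hx y|Hx].
  by apply/implyP; rewrite /same_block (def_pblock tI Hx) ?set11 // inE.
suff <- : pblock (val d) x = [set x] by apply: pblock_mem.
apply/setP => y; rewrite inE; apply/idP/eqP => [|->]; last by rewrite mem_pblock.
by move/(implyP (Hx y))/eqP.
Qed.

End Diagrams.

Section PermutationDiagrams.

Variables (n m : nat).
Hypothesis hmn : (m <= n)%N.
Implicit Types (d : diagram n) (s t : 'S_m) (j : 'I_n) (x y : node n).

Lemma perm_nat_lt s u : (perm_nat s u < m)%N = (u < m)%N.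
Proof.
by rewrite /perm_nat; case: insubP => [i _ <-|/negbTE //]; rewrite !ltn_ord.
Qed.

Lemma perm_nat_id s u : (m <= u)%N -> perm_nat s u = u.
Proof. by move=> mu; rewrite /perm_nat insubN // -leqNgt. Qed.

Lemma perm_nat1 u : perm_nat (1 : 'S_m) u = u.
Proof. by rewrite /perm_nat; case: insubP => [i _ <-|//]; rewrite perm1. Qed.

Lemma perm_natM s t u : perm_nat (s * t) u = perm_nat t (perm_nat s u).
Proof.
by rewrite /perm_nat; case: insubP => [i _ _|mu]; rewrite ?permM ?valK ?insubN.
Qed.

Lemma ext_nat_lt s k : (ext_nat n s k < n)%N = (k < n)%N.
Proof.
rewrite /ext_nat; case: ifP => // nmk; have := perm_nat_lt s (k - (n - m)).
by case: (ltnP (k - (n - m)) m) => Hk; [lia | rewrite perm_nat_id // subnKC].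
Qed.

Lemma ext_permE s j : val (ext_perm s j) = ext_nat n s j.
Proof. by rewrite /ext_perm insubdK // unfold_in /= ext_nat_lt. Qed.

Lemma ext_perm1 j : ext_perm (1 : 'S_m) j = j.
Proof.
apply: val_inj; rewrite ext_permE /ext_nat perm_nat1.
by case: ifP => // nmj; rewrite subnKC.
Qed.

Lemma ext_permM s t j : ext_perm (s * t) j = ext_perm t (ext_perm s j).
Proof.
apply: val_inj; rewrite !ext_permE /ext_nat; case: ifP => nmj; last by rewrite nmj.
by rewrite leq_addr addKn perm_natM.
Qed.

Lemma ext_permK s j : ext_perm s^-1 (ext_perm s j) = j.
Proof. by rewrite -ext_permM mulgV ext_perm1. Qed.

Lemma ext_permKV s j : ext_perm s (ext_perm s^-1 j) = j.
Proof. by rewrite -ext_permM mulVg ext_perm1. Qed.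

Lemma ext_perm_ge s j : (n - m <= ext_perm s j)%N = (n - m <= j)%N.
Proof. by rewrite ext_permE /ext_nat; case: ifP => nmj; rewrite ?leq_addr ?nmj. Qed.

Lemma ext_perm_id s j : (j < n - m)%N -> ext_perm s j = j.
Proof. by move=> jnm; apply: val_inj; rewrite ext_permE /ext_nat leqNgt jnm. Qed.

Lemma ext_perm_eq1 s : (forall j, (n - m <= j)%N -> ext_perm s j = j) -> s = 1%g.
Proof.
move=> fix_s; apply/permP => i; rewrite perm1.
have lt_i : (n - m + i < n)%N by have := ltn_ord i; lia.
have /(congr1 val) := fix_s (Ordinal lt_i) (leq_addr _ _).
rewrite ext_permE /ext_nat /= leq_addr addKn /perm_nat valK => /addnI.
exact: val_inj.
Qed.

Definition perm_block s x : 'I_n := if x.1 then ext_perm s^-1 x.2 else x.2.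

Lemma pdiag_preim s : pdiag n s = preim_partition (perm_block s) [set: node n].
Proof.
have blockE j : [set (false, j); (true, ext_perm s j)] = [set y | perm_block s y == j].
  apply/setP => -[[] i]; rewrite !inE /perm_block /= !xpair_eqE ?orbF //=.
  by apply/eqP/eqP => [->|<-]; rewrite ?ext_permK ?ext_permKV.
apply/setP => B; apply/imsetP/imsetP => [[j _ ->]|[x _ ->]].
  by exists (false, j) => //; rewrite blockE; apply/setP => y; rewrite !inE eq_sym.
by exists (perm_block s x) => //; rewrite blockE; apply/setP => y; rewrite !inE eq_sym.
Qed.

Lemma pdiag_diagram s : is_diagram (pdiag n s).
Proof. by rewrite /is_diagram pdiag_preim preim_partitionP. Qed.

Lemma same_block_pdiag s x y :
  same_block (pdiag n s) x y = (perm_block s x == perm_block s y).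
Proof.
rewrite /same_block pdiag_preim pblock_equivalence_partition //.
by move=> a b c _ _ _; split=> // /eqP ->.
Qed.

Definition relabel s x : node n := (x.1, if x.1 then ext_perm s x.2 else x.2).

Lemma relabel1 x : relabel 1 x = x.
Proof. by case: x => [[] j]; rewrite /relabel //= ext_perm1. Qed.

Lemma relabelM s t x : relabel (s * t) x = relabel t (relabel s x).
Proof. by case: x => [[] j]; rewrite /relabel //= ext_permM. Qed.

Lemma relabelK s x : relabel s^-1 (relabel s x) = x.
Proof. by rewrite -relabelM mulgV relabel1. Qed.

Lemma relabel_right s j : relabel s (true, j) = (true, ext_perm s j).
Proof. by []. Qed.

Lemma relabel_id s x : ~~ (x.1 && (n - m <= x.2)%N) -> relabel s x = x.
Proof. by case: x => [[] j] //=; rewrite -ltnNge /relabel /= => /ext_perm_id ->. Qed.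

(* Where a node of the stacked diagram d * pdiag s lands in d, once the
   permutation blocks of the lower factor are contracted. *)
Definition stack_proj s (u : tnode n) : node n :=
  if u.1 == Defs.row0 then (false, u.2) else if u.1 == Defs.row1 then (true, u.2)
  else (true, ext_perm s^-1 u.2).

Section Stacking.

Variables (d : diagram n) (s : 'S_m).
Local Notation edge := (stack_edge (val d) (pdiag n s)).

Lemma connect_stack_proj u v :
  connect edge u v -> same_block (val d) (stack_proj s u) (stack_proj s v).
Proof.
have edge_proj a b : edge a b -> same_block (val d) (stack_proj s a) (stack_proj s b).
  case/orP => /existsP [x /existsP [y /and3P [/eqP <- /eqP <- Hxy]]].
    by case: x y Hxy => [[] i] [[] j].
  move: Hxy; rewrite same_block_pdiag /perm_block /stack_proj.
  by case: x y => [[] i] [[] j] /= /eqP ->; apply: same_block_refl.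
case/connectP => p; elim: p u => [|w p IHp] u /=.
  by move=> _ ->; apply: same_block_refl.
by case/andP => /edge_proj uw /IHp wv /wv; apply: same_block_trans.
Qed.

Lemma connect_out_top x : connect edge (out_emb x) (top_emb (relabel s^-1 x)).
Proof.
case: x => [[] j]; last exact: connect0.
apply/connect1/orP; right; apply/existsP; exists (true, j).
by apply/existsP; exists (false, ext_perm s^-1 j); rewrite same_block_pdiag !eqxx.
Qed.

Lemma connect_top_out x : connect edge (top_emb (relabel s^-1 x)) (out_emb x).
Proof.
case: x => [[] j]; last exact: connect0.
apply/connect1/orP; right; apply/existsP; exists (false, ext_perm s^-1 j).
by apply/existsP; exists (true, j); rewrite same_block_pdiag !eqxx.
Qed.

Lemma connect_outE x y :
  connect edge (out_emb x) (out_emb y) = same_block (val d) (relabel s^-1 x) (relabel s^-1 y).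
Proof.
apply/idP/idP => [/connect_stack_proj|Hxy].
  by case: x => [[] i]; case: y => [[] j].
have topxy : edge (top_emb (relabel s^-1 x)) (top_emb (relabel s^-1 y)).
  by apply/orP; left; apply/existsP; exists (relabel s^-1 x); apply/existsP;
    exists (relabel s^-1 y); rewrite !eqxx Hxy.
apply: connect_trans (connect_out_top x) _.
exact: connect_trans (connect1 topxy) (connect_top_out y).
Qed.

Lemma mid_count_pdiag : mid_count (val d) (pdiag n s) = 0%N.
Proof.
rewrite /mid_count; apply/eqP; rewrite cards_eq0; apply/eqP/setP => C.
rewrite !inE; apply/negbTE/andP => -[/imsetP [[r j] _ ->] /subsetP sub_mid].
have conn_rj v : connect edge (r, j) v -> v.1 == Defs.row1.
  by move=> rjv; have := sub_mid v; rewrite !inE; apply.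
have r1 : r = Defs.row1 by apply/eqP; exact: conn_rj _ (connect0 _ _).
subst r.
suff /conn_rj : connect edge (Defs.row1, j) (Defs.row2, ext_perm s j) by [].
apply/connect1/orP; right; apply/existsP; exists (false, j).
apply/existsP; exists (true, ext_perm s j).
by rewrite same_block_pdiag /perm_block /= ext_permK !eqxx.
Qed.

End Stacking.

Lemma comp_pdiag_diagram d s : is_diagram (comp_raw (val d) (pdiag n s)).
Proof.
apply: equivalence_partitionP => x y z _ _ _ /=; rewrite !connect_outE.
exact: same_block_equiv.
Qed.

Definition dact d s : diagram n :=
  exist _ (comp_raw (val d) (pdiag n s)) (comp_pdiag_diagram d s).

Lemma same_block_dact d s x y :
  same_block (val (dact d s)) x y = same_block (val d) (relabel s^-1 x) (relabel s^-1 y).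
Proof.
rewrite /same_block /= /comp_raw pblock_equivalence_partition ?inE ?connect_outE //.
by move=> a b c _ _ _ /=; rewrite !connect_outE; apply: same_block_equiv.
Qed.

Lemma dact1 d : dact d 1 = d.
Proof. by apply: eq_diagram => x y; rewrite same_block_dact invg1 !relabel1. Qed.

Lemma dactM d s t : dact d (s * t) = dact (dact d s) t.
Proof.
(* Unrestricted rewriting would try to unify [val d] with [val (dact _ _)],
   which unfolds the (expensive) stacking product. *)
apply: eq_diagram => x y.
rewrite [LHS]same_block_dact [RHS]same_block_dact [RHS]same_block_dact.
by rewrite invMg !relabelM.
Qed.

Definition diagram_action := TotalAction dact1 dactM.

Lemma Jdiag_of_dact d s : Jdiag m (dact d s) -> Jdiag m d.
Proof.
rewrite /Jdiag; case/orP => [/existsP [i /andP [nmi]]|/existsP [i /existsP [j]]].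
  rewrite singleton_blockE => /forallP single_i; apply/orP; left.
  apply/existsP; exists (ext_perm s^-1 i); rewrite ext_perm_ge nmi singleton_blockE /=.
  apply/forallP => y; apply/implyP => iy.
  rewrite -(can_eq (relabelK s)) relabel_right ext_permKV.
  by have := single_i (relabel s y); rewrite same_block_dact relabelK relabel_right iy.
case/and4P => nmi nmj neq_ij; rewrite same_block_dact !relabel_right => ij.
apply/orP; right; apply/existsP; exists (ext_perm s^-1 i); apply/existsP.
by exists (ext_perm s^-1 j); rewrite !ext_perm_ge nmi nmj (can_eq (ext_permKV s)) neq_ij.
Qed.

Definition nonJ_diagrams : {set diagram n} := [set d | ~~ Jdiag m d].

Lemma acts_nonJ_diagrams : [acts [set: 'S_m], on nonJ_diagrams | diagram_action].
Proof.
apply/actsP => s _ d; rewrite !inE /=; congr (~~ _).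
apply/idP/idP; first exact: Jdiag_of_dact.
by rewrite -{1}(dact1 d) -(mulgV s) dactM; apply: Jdiag_of_dact.
Qed.

Lemma nonJ_tail_inj d (i j : 'I_n) :
    ~~ Jdiag m d -> (n - m <= i)%N -> (n - m <= j)%N ->
  same_block (val d) (true, i) (true, j) -> i = j.
Proof.
move=> nJ nmi nmj ij; apply/eqP; apply: contraNT nJ => neq_ij; apply/orP; right.
by apply/existsP; exists i; apply/existsP; exists j; rewrite nmi nmj neq_ij.
Qed.

Lemma nonJ_tail_partner d j : ~~ Jdiag m d -> (n - m <= j)%N ->
  exists2 z, same_block (val d) (true, j) z & z != (true, j).
Proof.
move=> nJ nmj; apply/exists_inP; apply: contraR nJ => /exists_inPn alone.
apply/orP; left; apply/existsP; exists j; rewrite nmj singleton_blockE.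
by apply/forallP => z; apply/implyP => /alone; rewrite negbK.
Qed.

Lemma astab1_nonJ d : d \in nonJ_diagrams -> 'C[d | diagram_action]%g = 1%g.
Proof.
rewrite inE => nJ; apply/trivgP/subsetP => s /astab1P /= fix_s; apply/set1gP.
apply/eqP; rewrite -invg_eq1; apply/eqP/ext_perm_eq1 => j nmj.
have [z jz neq_zj] := nonJ_tail_partner nJ nmj.
have fix_z : relabel s^-1 z = z.
  apply: relabel_id; apply: contra neq_zj; case: z jz => [[] k] //= jk nmk.
  by rewrite (nonJ_tail_inj nJ nmj nmk jk).
have := jz; rewrite -{1}fix_s same_block_dact fix_z relabel_right => jz'.
apply/esym/(nonJ_tail_inj nJ nmj); first by rewrite ext_perm_ge.
by apply: same_block_trans jz _; rewrite same_block_sym jz'.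
Qed.

End PermutationDiagrams.

Section FreeQuotient.

Variables (R : comPzRingType) (delta : R) (n m : nat).
Hypothesis hmn : (m <= n)%N.
Implicit Types (d r : diagram n) (s : 'S_m).
Implicit Types (x : {ffun diagram n -> R}) (a : {ffun 'S_m -> R}).

Lemma pn_ractE x a d :
  pn_ract delta x a d = \sum_d1 \sum_(s | dact hmn d1 s == d) x d1 * a s.
Proof.
rewrite /pn_ract /pmul ffunE; apply: eq_bigr => d1 _.
under eq_bigr => d2 _ do rewrite ffunE mulr_sumr mulr_suml.
rewrite (exchange_big_dep xpredT) //= [RHS]big_mkcond; apply: eq_bigr => s _.
pose ds : diagram n := exist _ (pdiag n s) (pdiag_diagram hmn s).
rewrite big_mkcond (bigD1 ds) //= big1 ?addr0 => [|d2 ne_d2]; last first.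
  by case: ifP => // /andP [_ /eqP Es]; case/eqP: ne_d2; apply: val_inj.
by rewrite eqxx andbT (mid_count_pdiag hmn) expr0 mulr1.
Qed.

Definition diag_vec r : {ffun diagram n -> R} := [ffun e => (e == r)%:R].

Lemma pn_ract_diag_vec r a d :
  pn_ract delta (diag_vec r) a d = \sum_(s | dact hmn r s == d) a s.
Proof.
rewrite pn_ractE (bigD1 r) //= [X in _ + X]big1 ?addr0 => [|d1 ne_d1].
  by apply: eq_bigr => s _; rewrite ffunE eqxx mul1r.
by apply: big1 => s _; rewrite ffunE (negbTE ne_d1) mul0r.
Qed.

Local Notation reps :=
  (orbit_transversal (diagram_action hmn) [set: 'S_m] (nonJ_diagrams n m)).

Lemma dact_reps_inj r r' s s' :
  r \in reps -> r' \in reps -> dact hmn r s = dact hmn r' s' -> r = r' /\ s = s'.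
Proof.
exact: orbit_transversal_act_inj (acts_nonJ_diagrams hmn) (@astab1_nonJ n m hmn) r r' s s'.
Qed.

Lemma dact_reps_nonJ r s : r \in reps -> ~~ Jdiag m (dact hmn r s).
Proof.
have [_ /subsetP sub_reps _ _] := orbit_transversalP (acts_nonJ_diagrams hmn).
by move=> /sub_reps; rewrite -(actsP (acts_nonJ_diagrams hmn) s (in_setT s)) inE.
Qed.

Lemma dact_reps_onto d :
  ~~ Jdiag m d -> exists (i : 'I_#|reps|) s, dact hmn (enum_val i) s = d.
Proof.
move=> nJ; have nJd : d \in nonJ_diagrams n m by rewrite inE.
have [r Xr [s <-]] := orbit_transversal_act_onto (acts_nonJ_diagrams hmn) nJd.
by exists (enum_rank_in Xr r), s; rewrite enum_rankK_in.
Qed.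

Lemma dact_reps_eq r s t : r \in reps -> (dact hmn r s == dact hmn r t) = (s == t).
Proof. by move=> Xr; apply/eqP/eqP => [/dact_reps_inj [] // | ->]. Qed.

Lemma sum_ract_reps (a : 'I_#|reps| -> {ffun 'S_m -> R}) i s :
  (\sum_(k < #|reps|) pn_ract delta (diag_vec (enum_val k)) (a k))
    (dact hmn (enum_val i) s) = a i s.
Proof.
rewrite sum_ffunE (bigD1 i) //= [X in _ + X]big1 ?addr0 => [|k ne_ki].
  by rewrite pn_ract_diag_vec (big_pred1 s) // => t; apply: dact_reps_eq (enum_valP i).
rewrite pn_ract_diag_vec big_pred0 // => t; apply/negbTE/eqP.
case/dact_reps_inj; rewrite ?enum_valP // => /enum_val_inj Eki _.
by rewrite Eki eqxx in ne_ki.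
Qed.

End FreeQuotient.

Theorem lemma5p2 (R : comPzRingType) (delta : R) (n m : nat) (hmn : (m <= n)%N) :
  exists (k : nat) (b : 'I_k -> {ffun diagram n -> R}),
    (forall x : {ffun diagram n -> R},
       exists a : 'I_k -> {ffun 'S_m -> R},
         inJ m (x - \sum_(i < k) pn_ract delta (b i) (a i)))
    /\ (forall a a' : 'I_k -> {ffun 'S_m -> R},
         inJ m (\sum_(i < k) pn_ract delta (b i) (a i)
                - \sum_(i < k) pn_ract delta (b i) (a' i)) ->
         forall i, a i = a' i).
Proof.
set reps := orbit_transversal (diagram_action hmn) [set: 'S_m] (nonJ_diagrams n m).
exists #|reps|, (fun i => diag_vec R (enum_val i)); split.
  move=> x; exists (fun i => [ffun s => x (dact hmn (enum_val i) s)]) => d.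
  apply: contraR => nJ.
  have [i [s <-]] := dact_reps_onto hmn nJ.
  by rewrite !ffunE sum_ract_reps ffunE subrr.
move=> a a' coef_J i; apply/ffunP => s; apply/eqP; rewrite -subr_eq0.
apply: contraTT (dact_reps_nonJ s (enum_valP i)) => ne0; rewrite negbK.
by apply: coef_J; rewrite !ffunE !sum_ract_reps.
Qed.
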